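(* A $T_1$-space $X$ has a regular base at non-isolated points if and only if $X$ has a strong development at non-isolated points.
   Context: $I(X)$ is the set of isolated points of $X$, $\mathcal{I}(X)=\{\{x\}:x\in I(X)\}$, $\mathrm{st}(A,\mathcal{W})=\bigcup\{W\in\mathcal{W}:W\cap A\neq\emptyset\}$. A base $\mathcal{B}$ is regular at $x$ if for every neighborhood $U$ of $x$ there is an open $V$ with $x\in V\subset U$ such that $\{B\in\mathcal{B}: B\cap V\neq\emptyset,\ B\not\subset U\}$ is finite; it is a regular base at non-isolated points if it is regular at every $x\in X\setminus I(X)$. A sequence $\{\mathcal{W}_i\}_{i\in\mathbb{N}}$ of open covers of $X$ with $\mathcal{I}(X)\subset\bigcup_i\mathcal{W}_i$ is a strong development at non-isolated points if for every $x\in X\setminus I(X)$ and every neighborhood $U$ of $x$ there are a neighborhood $V$ of $x$ and $i\in\mathbb{N}$ with $\mathrm{st}(V,\mathcal{W}_i)\subset U$. *)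

From Stdlib Require Import List Classical.

Set Implicit Arguments.

Definition set (X : Type) := X -> Prop.
Definition family (X : Type) := set X -> Prop.

Record topology (X : Type) := Topology {
  is_open : set X -> Prop;
  open_full : is_open (fun _ => True);
  open_inter : forall U V, is_open U -> is_open V -> is_open (fun x => U x /\ V x);
  open_union : forall F : family X, (forall U, F U -> is_open U) ->
                 is_open (fun x => exists U, F U /\ U x)
}.

Section Topo.
Variables (X : Type) (T : topology X).

Definition subset (A B : set X) : Prop := forall x, A x -> B x.
Definition meets (A B : set X) : Prop := exists x, A x /\ B x.

Definition nbhd (x : X) (U : set X) : Prop :=
  exists O, is_open T O /\ O x /\ subset O U.

Definition T1 : Prop :=
  forall x y : X, x <> y -> exists U, is_open T U /\ U x /\ ~ U y.

Definition isolated (x : X) : Prop := is_open T (fun y => y = x).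

Definition finite_family (F : family X) : Prop :=
  exists l : list (set X), forall B, F B -> In B l.

Definition base (B : family X) : Prop :=
  (forall U, B U -> is_open T U) /\
  (forall U, is_open T U -> forall x, U x -> exists V, B V /\ V x /\ subset V U).

Definition regular_at (B : family X) (x : X) : Prop :=
  forall U, nbhd x U ->
    exists V, is_open T V /\ V x /\ subset V U /\
      finite_family (fun W => B W /\ meets W V /\ ~ subset W U).

Definition regular_base_at_nonisolated (B : family X) : Prop :=
  base B /\ forall x, ~ isolated x -> regular_at B x.

Definition open_cover (W : family X) : Prop :=
  (forall U, W U -> is_open T U) /\ (forall x, exists U, W U /\ U x).

Definition star (A : set X) (W : family X) : set X :=
  fun y => exists U, W U /\ meets U A /\ U y.

Definition strong_development_at_nonisolated (W : nat -> family X) : Prop :=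
  (forall i, open_cover (W i)) /\
  (forall x, isolated x -> exists i U, W i U /\ (forall y, U y <-> y = x)) /\
  (forall x, ~ isolated x -> forall U, nbhd x U ->
     exists V i, nbhd x V /\ subset (star V (W i)) U).

End Topo.

(* (=>) Let B be a base regular at non-isolated points, and let W_n consist of
   the singletons of isolated points together with the members of B that end a
   strictly decreasing chain B_0 ⊋ B_1 ⊋ ... ⊋ B_n of members of B.  By T1 a
   non-isolated point ends such chains of every length, so each W_n is an open
   cover.  If only l members of B meet V without lying in U, every member of
   W_l meeting V lies in U: otherwise its chain gives l+1 distinct such members.

   (<=) Let W be a strong development and H_n = W_0 ∧ ... ∧ W_n.  Fixing a
   well-order of the subsets of X, for every level m a Stone-type construction
   produces open sets D_n(A) ⊆ A (A ∈ H_m) which cover the non-isolated points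
   and are locally finite at them.  The base consists of the singletons of
   isolated points and of the sets D_n(A) of all levels.  It is regular at a
   non-isolated x: near x the sets of levels m >= m0 lie inside the given U,
   and the finitely many remaining levels form a locally finite family. *)

From Stdlib Require Import List Classical Arith Lia FunctionalExtensionality PropExtensionality.
From mathcomp Require ssreflect ssrfun ssrbool eqtype boolp wochoice.

Set Implicit Arguments.
Unset Strict Implicit.

Module WellOrder.
Import ssreflect ssrfun ssrbool eqtype boolp wochoice.

Lemma well_order_exists (T : Type) : exists R : T -> T -> Prop,
  (forall P : T -> Prop, (exists x, P x) -> exists z, P z /\ forall y, P y -> R z y) /\
  (forall a b, R a b -> R b a -> a = b).
Proof.
have [R woR] := well_ordering_principle (classicType T).
have R_anti : {in predT &, antisymmetric R}.
  by apply: wo_chain_antisymmetric; apply: withinW.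
exists (fun a b => R a b); split=> [P [x Px] | a b Rab Rba].
- have [z [[/asboolP Pz lbz] _]] := woR [pred y | `[< P y >]] (ex_intro _ x (asboolT Px)).
  by exists z; split=> // y Py; apply: lbz; apply/asboolP.
- by apply: R_anti => //; rewrite Rab Rba.
Qed.

End WellOrder.

Lemma injective_prefix_length (A : Type) (c : nat -> A) (l : list A) (n : nat) :
  (forall i j, i < j <= n -> c i <> c j) ->
  (forall k, k <= n -> In (c k) l) -> n < length l.
Proof.
  intros Hinj Hin.
  assert (Hnodup : NoDup (map c (seq 0 (S n)))).
  { apply NoDup_map_NoDup_ForallPairs; [|apply seq_NoDup].
    intros i j Hi Hj E. apply in_seq in Hi, Hj.
    destruct (Nat.lt_total i j) as [Hlt|[Heq|Hgt]]; auto; exfalso.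
    - apply (Hinj i j); [lia|exact E].
    - apply (Hinj j i); [lia|auto]. }
  assert (Hincl : incl (map c (seq 0 (S n))) l).
  { intros a Ha. apply in_map_iff in Ha. destruct Ha as [k [<- Hk]].
    apply in_seq in Hk. apply Hin; lia. }
  pose proof (NoDup_incl_length Hnodup Hincl) as Hlen.
  rewrite length_map, length_seq in Hlen. lia.
Qed.

Section Topology.
Variables (X : Type) (T : topology X).

Lemma open_ext (U V : set X) : is_open T U -> (forall x, U x <-> V x) -> is_open T V.
Proof.
  intros HU HUV. replace V with U; [exact HU|].
  apply functional_extensionality; intro x; apply propositional_extensionality; auto.
Qed.

Lemma nbhd_in (x : X) (U : set X) : nbhd T x U -> U x.
Proof. intros [O [_ [Ox sOU]]]; auto. Qed.

Lemma open_nbhd (x : X) (U : set X) : is_open T U -> U x -> nbhd T x U.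
Proof. intros HU Ux; exists U; repeat split; auto. intros y; auto. Qed.

Lemma nonisolated_other (x : X) (O : set X) :
  ~ isolated T x -> is_open T O -> O x -> exists y, O y /\ y <> x.
Proof.
  intros Hx HO Ox. apply NNPP; intro Hnone. apply Hx. apply open_ext with O; auto.
  intro y; split; intro Hy.
  - apply NNPP; intro Hyx; apply Hnone; exists y; auto.
  - subst; auto.
Qed.

Lemma star_open (A : set X) (W : family X) :
  (forall U, W U -> is_open T U) -> is_open T (star A W).
Proof.
  intro HW. apply open_ext with (fun x => exists U, (W U /\ meets U A) /\ U x).
  - apply open_union. intros U [HU _]; auto.
  - intro x; unfold star; split; intros [U HU]; exists U; tauto.
Qed.

Lemma star_mono (A A' : set X) (W : family X) :
  subset A A' -> subset (star A W) (star A' W).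
Proof.
  intros HA y [U [HU [[z [Uz Az]] Uy]]]. exists U; repeat split; auto. exists z; auto.
Qed.

Lemma star_incl (A : set X) (W : family X) :
  (forall x, exists U, W U /\ U x) -> subset A (star A W).
Proof.
  intros HW x Ax. destruct (HW x) as [U [HU Ux]].
  exists U; repeat split; auto. exists x; auto.
Qed.

Lemma star_refine (A : set X) (W W' : family X) :
  (forall U, W U -> exists U', W' U' /\ subset U U') -> subset (star A W) (star A W').
Proof.
  intros Href y [U [HU [[z [Uz Az]] Uy]]]. destruct (Href U HU) as [U' [HU' sUU']].
  exists U'; repeat split; auto. exists z; auto.
Qed.

Lemma finite_family_mono (F G : family X) :
  (forall S, F S -> G S) -> finite_family G -> finite_family F.
Proof. intros HFG [l Hl]; exists l; auto. Qed.

Lemma finite_family_union (F G : family X) :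
  finite_family F -> finite_family G -> finite_family (fun S => F S \/ G S).
Proof.
  intros [l Hl] [l' Hl']. exists (l ++ l').
  intros S [HS|HS]; apply in_or_app; auto.
Qed.

Lemma finite_family_at_most_one (F : family X) :
  (forall S S', F S -> F S' -> S = S') -> finite_family F.
Proof.
  intro Huniq. destruct (classic (exists S, F S)) as [[S HS]|Hnone].
  - exists (S :: nil). intros S' HS'. left. apply Huniq; auto.
  - exists nil. intros S HS. apply Hnone; eauto.
Qed.

Definition locally_finite_at (F : family X) (x : X) : Prop :=
  exists O, is_open T O /\ O x /\ finite_family (fun S => F S /\ meets S O).

Lemma locally_finite_bounded_union (F : nat -> family X) (x : X) (K : nat) :
  (forall k, k < K -> locally_finite_at (F k) x) ->
  locally_finite_at (fun S => exists k, k < K /\ F k S) x.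
Proof.
  induction K as [|K IH]; intro HF.
  - exists (fun _ => True). split; [apply open_full|split; [exact I|]].
    exists nil. intros S [[k [Hk _]] _]. lia.
  - destruct IH as [O [HO [Ox Hfin]]]; [intros k Hk; apply HF; lia|].
    destruct (HF K (Nat.lt_succ_diag_r K)) as [O' [HO' [O'x Hfin']]].
    exists (fun y => O y /\ O' y). split; [apply open_inter; auto|split; [auto|]].
    eapply finite_family_mono; [|exact (finite_family_union Hfin Hfin')].
    intros S [[k [Hk HS]] [w [Sw [Ow O'w]]]].
    destruct (Nat.eq_dec k K) as [->|Hne].
    + right. split; [auto|exists w; auto].
    + left. split; [exists k; split; [lia|auto]|exists w; auto].
Qed.

Lemma locally_finite_reduce (F G : family X) (x : X) (O0 : set X) :
  is_open T O0 -> O0 x -> locally_finite_at G x ->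
  (forall S, F S -> meets S O0 -> G S) ->
  exists O, is_open T O /\ O x /\ subset O O0 /\
    finite_family (fun S => F S /\ meets S O).
Proof.
  intros HO0 O0x [O [HO [Ox Hfin]]] HFG.
  exists (fun y => O y /\ O0 y). split; [apply open_inter; auto|].
  split; [auto|split; [intros y [_ Hy]; exact Hy|]].
  eapply finite_family_mono; [|exact Hfin].
  intros S [HS [w [Sw [Ow O0w]]]]. split.
  - apply HFG; [auto|exists w; auto].
  - exists w; auto.
Qed.

Section Forward.
Variable B : family X.
Hypothesis HB : regular_base_at_nonisolated T B.

Definition strict_chain (c : nat -> set X) (n : nat) : Prop :=
  forall k, k < n -> B (c k) /\ subset (c (S k)) (c k) /\ ~ subset (c k) (c (S k)).

Definition chain_cover (n : nat) : family X := fun U =>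
  (exists x, isolated T x /\ U = (fun y => y = x)) \/
  (B U /\ exists c, c n = U /\ strict_chain c n).

Lemma chain_antitone (c : nat -> set X) (n : nat) :
  strict_chain c n -> forall j k, k <= j -> j <= n -> subset (c j) (c k).
Proof.
  intros Hc j. induction j as [|j IH]; intros k Hkj Hjn.
  - replace k with 0 by lia. intros y; auto.
  - destruct (Nat.eq_dec k (S j)) as [->|Hne]; [intros y; auto|].
    intros y Hy. apply (IH k); try lia.
    destruct (Hc j) as [_ [HS _]]; [lia|auto].
Qed.

Lemma chain_injective (c : nat -> set X) (n : nat) :
  strict_chain c n -> forall i j, i < j <= n -> c i <> c j.
Proof.
  intros Hc i j Hij E. destruct (Hc i) as [_ [_ Hstrict]]; [lia|].
  apply Hstrict. rewrite E. apply (chain_antitone Hc); lia.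
Qed.

Hypothesis HT1 : T1 T.

Lemma chain_exists (x : X) : ~ isolated T x ->
  forall n, exists c, B (c n) /\ c n x /\ strict_chain c n.
Proof.
  intros Hx n. induction n as [|n IH].
  - destruct (proj2 (proj1 HB) _ (open_full T) x I) as [B0 [HB0 [B0x _]]].
    exists (fun _ => B0). split; [auto|split; [auto|intros k Hk; lia]].
  - destruct IH as [c [Bcn [cnx Hc]]].
    assert (Ocn : is_open T (c n)) by (apply (proj1 (proj1 HB)); auto).
    destruct (nonisolated_other Hx Ocn cnx) as [y [cny yx]].
    destruct (HT1 (not_eq_sym yx)) as [O [HO [Ox Oy]]].
    destruct (proj2 (proj1 HB) _ (open_inter T _ _ Ocn HO) x (conj cnx Ox))
      as [B' [HB' [B'x sB']]].
    exists (fun k => if Nat.leb k n then c k else B').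
    assert (E : Nat.leb (S n) n = false) by (apply Nat.leb_gt; lia).
    rewrite E. split; [auto|split; [auto|]].
    intros k Hk. assert (E2 : Nat.leb k n = true) by (apply Nat.leb_le; lia). rewrite E2.
    destruct (Nat.eq_dec k n) as [->|Hne].
    + rewrite E. repeat split; auto.
      * intros z Hz; apply (sB' z Hz).
      * intro Hs. apply Oy. apply (sB' y (Hs y cny)).
    + assert (E3 : Nat.leb (S k) n = true) by (apply Nat.leb_le; lia). rewrite E3.
      apply Hc; lia.
Qed.

Lemma chain_cover_open_cover (n : nat) : open_cover T (chain_cover n).
Proof.
  split.
  - intros U [[x [Hx ->]] | [HU _]]; [exact Hx|]. apply (proj1 (proj1 HB)); auto.
  - intro x. destruct (classic (isolated T x)) as [Hi|Hx].
    + exists (fun y => y = x). split; auto. left; exists x; auto.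
    + destruct (chain_exists Hx n) as [c [Bc [cx Hc]]].
      exists (c n). split; auto. right; split; auto. exists c; auto.
Qed.

(* If l lists the members of B meeting V but not inside U, then every member of
   chain_cover (length l) meeting V lies inside U. *)
Lemma chain_cover_star (x : X) : ~ isolated T x -> forall U, nbhd T x U ->
  exists V i, nbhd T x V /\ subset (star V (chain_cover i)) U.
Proof.
  intros Hx U HU. destruct (proj2 HB x Hx U HU) as [V [HV [Vx [VU [l Hl]]]]].
  exists V, (length l). split; [apply open_nbhd; auto|].
  intros y [U' [HU' [[z [U'z Vz]] U'y]]].
  destruct HU' as [[w [Hw ->]] | [BU' [c [Ecn Hc]]]].
  - subst. subst. apply VU; auto.
  - apply NNPP; intro Uy. set (n := length l) in *.
    assert (Hchain : forall k, k <= n -> subset (c n) (c k))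
      by (intros k Hk; apply (chain_antitone Hc); lia).
    cut (n < length l); [unfold n; lia|].
    apply (injective_prefix_length (chain_injective Hc)).
    intros k Hk. apply Hl. split; [|split].
    + destruct (Nat.eq_dec k n) as [->|Hne]; [rewrite Ecn; auto|]. apply Hc; lia.
    + exists z. split; auto. apply Hchain; [auto|rewrite Ecn; auto].
    + intro Hs. apply Uy, Hs, Hchain; [auto|rewrite Ecn; auto].
Qed.

Lemma strong_development_of_regular_base :
  strong_development_at_nonisolated T chain_cover.
Proof.
  split; [exact chain_cover_open_cover|split; [|exact chain_cover_star]].
  intros x Hx. exists 0, (fun y => y = x).
  split; [left; exists x; auto|intro; tauto].
Qed.

End Forward.

Section Backward.
Variable W : nat -> family X.
Hypothesis HW : strong_development_at_nonisolated T W.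

Fixpoint refinement (n : nat) : family X :=
  match n with
  | 0 => W 0
  | S n => fun A => exists B C, refinement n B /\ W (S n) C /\ A = (fun x => B x /\ C x)
  end.

Lemma refinement_open (n : nat) (A : set X) : refinement n A -> is_open T A.
Proof.
  revert A; induction n as [|n IH]; intros A HA; simpl in HA.
  - apply (proj1 (proj1 HW 0)); auto.
  - destruct HA as [B [C [HB [HC ->]]]]. apply open_inter; auto.
    apply (proj1 (proj1 HW (S n))); auto.
Qed.

Lemma refinement_cover (n : nat) (x : X) : exists A, refinement n A /\ A x.
Proof.
  induction n as [|n IH]; simpl.
  - apply (proj2 (proj1 HW 0)).
  - destruct IH as [B [HB Bx]]. destruct (proj2 (proj1 HW (S n)) x) as [C [HC Cx]].
    exists (fun x => B x /\ C x); split; auto. exists B, C; auto.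
Qed.

Lemma refinement_refines (n : nat) : forall i, i <= n ->
  forall A, refinement n A -> exists A', W i A' /\ subset A A'.
Proof.
  induction n as [|n IH]; intros i Hi A HA.
  - replace i with 0 by lia. exists A; split; auto. intros y; auto.
  - destruct HA as [B [C [HB [HC ->]]]].
    destruct (Nat.eq_dec i (S n)) as [->|Hne].
    + exists C; split; auto. intros y [_ Cy]; exact Cy.
    + destruct (IH i ltac:(lia) B HB) as [A' [HA' sBA']].
      exists A'; split; auto. intros y [By _]; auto.
Qed.

Lemma star_eventually (x : X) : ~ isolated T x -> forall U, nbhd T x U ->
  exists V n0, nbhd T x V /\ forall n, n0 <= n -> subset (star V (refinement n)) U.
Proof.
  intros Hx U HU. destruct (proj2 (proj2 HW) x Hx U HU) as [V [i [HV sV]]].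
  exists V, i. split; auto. intros n Hin y Hy. apply sV.
  apply (star_refine (W := refinement n)); auto.
  intros A HA. apply (refinement_refines Hin HA).
Qed.

Definition star3 (n : nat) (y : X) : set X :=
  star (star (star (fun z => z = y) (refinement n)) (refinement n)) (refinement n).

Lemma star3_eventually (x : X) : ~ isolated T x -> forall U, nbhd T x U ->
  exists n0, forall n, n0 <= n -> subset (star3 n x) U.
Proof.
  intros Hx U HU.
  destruct (star_eventually Hx HU) as [V1 [a [HV1 s1]]].
  destruct (star_eventually Hx HV1) as [V2 [b [HV2 s2]]].
  destruct (star_eventually Hx HV2) as [V3 [c [HV3 s3]]].
  exists (a + b + c). intros n Hle y Hy. apply (s1 n ltac:(lia)).
  revert y Hy. apply star_mono. intros y Hy. apply (s2 n ltac:(lia)).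
  revert y Hy. apply star_mono. intros y Hy. apply (s3 n ltac:(lia)).
  revert y Hy. apply star_mono. intros y ->. apply (nbhd_in HV3).
Qed.

Lemma star3_link (n : nat) (y y' z z' : X) (U P U' : set X) :
  refinement n U -> refinement n P -> refinement n U' ->
  U y -> U z -> P z -> P z' -> U' z' -> U' y' -> star3 n y y'.
Proof.
  intros HU HP HU' Uy Uz Pz Pz' U'z' U'y'.
  exists U'; split; [auto|split; [|auto]]. exists z'; split; [auto|].
  exists P; split; [auto|split; [|auto]]. exists z; split; [auto|].
  exists U; split; [auto|split; [|auto]]. exists y; auto.
Qed.

Lemma point_star_star3 (n : nat) (y : X) :
  subset (star (fun z => z = y) (refinement n)) (star3 n y).
Proof.
  intros z Hz. unfold star3.
  apply star_incl; [apply refinement_cover|]. apply star_incl; [apply refinement_cover|]. auto.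
Qed.

Section WellOrdered.
Variable R : set X -> set X -> Prop.
Hypothesis R_least : forall P : set X -> Prop,
  (exists A, P A) -> exists A, P A /\ forall A', P A' -> R A A'.
Hypothesis R_anti : forall A A', R A A' -> R A' A -> A = A'.

Section Level.
Variable m : nat.

Definition least_member (y : X) (A : set X) : Prop :=
  refinement m A /\ A y /\ forall A', refinement m A' -> A' y -> R A A'.

Definition kernel (n : nat) (C : set X) (A : set X) : set X :=
  fun y => least_member y A /\ ~ C y /\ subset (star3 n y) A.

Fixpoint covered (n : nat) : set X :=
  match n with
  | 0 => fun _ => False
  | S n => fun z => covered n z \/ exists A, star (kernel n (covered n) A) (refinement n) z
  end.

Definition piece (n : nat) (A : set X) : set X :=
  star (kernel n (covered n) A) (refinement n).

Definition stage (n : nat) : family X := fun S => exists A, refinement m A /\ S = piece n A.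

Definition level : family X := fun S => exists n, stage n S.

Lemma piece_open (n : nat) (A : set X) : is_open T (piece n A).
Proof. apply star_open. apply refinement_open. Qed.

(* D_n(A) ⊆ A, since star3 y ⊆ A for every point y of the kernel. *)
Lemma piece_sub (n : nat) (A : set X) : subset (piece n A) A.
Proof.
  intros z [U [HU [[y [Uy [_ [_ Hstar]]]] Uz]]]. apply Hstar.
  apply point_star_star3. exists U; repeat split; auto. exists y; auto.
Qed.

Lemma covered_iff (n : nat) (z : X) :
  covered n z <-> exists j A, j < n /\ piece j A z.
Proof.
  induction n as [|n IH]; simpl.
  - split; [contradiction|intros [j [A [Hj _]]]; lia].
  - rewrite IH. split.
    + intros [[j [A [Hj HD]]] | [A HA]].
      * exists j, A; split; [lia|auto].
      * exists n, A; split; [lia|exact HA].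
    + intros [j [A [Hj HD]]]. destruct (Nat.eq_dec j n) as [->|Hne].
      * right; exists A; exact HD.
      * left; exists j, A; split; [lia|auto].
Qed.

(* The pieces cover the non-isolated points: x enters the kernel of its least
   member A as soon as star3 n x ⊆ A, unless it has been covered before. *)
Lemma piece_cover (x : X) : ~ isolated T x -> exists n A, refinement m A /\ piece n A x.
Proof.
  intro Hx.
  destruct (R_least (refinement_cover m x))
    as [A [[HA Ax] Aleast]].
  destruct (star3_eventually Hx (open_nbhd (refinement_open HA) Ax)) as [n0 Hn0].
  destruct (classic (covered n0 x)) as [Hc|Hc].
  - apply covered_iff in Hc. destruct Hc as [j [A' [_ HD]]]. exists j, A'. split; auto.
    destruct HD as [U [_ [[y [_ [[HA' _] _]]] _]]]. auto.
  - exists n0, A. split; auto. destruct (refinement_cover n0 x) as [U [HU Ux]].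
    exists U; split; [auto|split; [|auto]]. exists x; split; [auto|].
    split; [|split; [auto|apply Hn0; auto]]. split; [auto|split; [auto|]].
    intros A' HA' A'x. apply Aleast; auto.
Qed.

Lemma piece_unique (n : nat) (P A A' : set X) : refinement n P ->
  meets (piece n A) P -> meets (piece n A') P -> A = A'.
Proof.
  intros HP [z [[U [HU [[y [Uy Ky]] Uz]]] Pz]] [z' [[U' [HU' [[y' [U'y' Ky']] U'z']]] Pz']].
  destruct Ky as [[HA [Ay Aleast]] [_ sA]]. destruct Ky' as [[HA' [A'y' A'least]] [_ sA']].
  apply R_anti.
  - apply Aleast; auto. apply sA'. apply (star3_link HU' HP HU U'y' U'z' Pz' Pz Uz Uy).
  - apply A'least; auto. apply sA. apply (star3_link HU HP HU' Uy Uz Pz Pz' U'z' U'y').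
Qed.

Lemma piece_far (x : X) (j : nat) (A0 : set X) : ~ isolated T x -> piece j A0 x ->
  exists O N, is_open T O /\ O x /\ forall n A, N <= n -> ~ meets (piece n A) O.
Proof.
  intros Hx HD.
  destruct (star_eventually Hx (open_nbhd (piece_open j A0) HD))
    as [V [n0 [[O [HO [Ox OV]]] sV]]].
  exists O, (n0 + S j). split; [auto|split; [auto|]].
  intros n A Hle [z [[U [HU [[y [Uy [_ [Hc _]]]] Uz]]] Oz]].
  apply Hc. apply covered_iff. exists j, A0. split; [lia|].
  apply (sV n ltac:(lia)). exists U; split; auto; split; auto. exists z; auto.
Qed.

Lemma stage_locally_finite (n : nat) (x : X) : locally_finite_at (stage n) x.
Proof.
  destruct (refinement_cover n x) as [P [HP Px]].
  exists P. split; [apply (refinement_open HP)|split; [auto|]].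
  apply finite_family_at_most_one.
  intros S S' [[A [_ ->]] MS] [[A' [_ ->]] MS'].
  f_equal. apply (piece_unique HP MS MS').
Qed.

Lemma level_locally_finite (x : X) : ~ isolated T x -> locally_finite_at level x.
Proof.
  intro Hx. destruct (piece_cover Hx) as [j [A0 [_ HD]]].
  destruct (piece_far Hx HD) as [O0 [N [HO0 [O0x far]]]].
  destruct (locally_finite_reduce (F := level)
              (G := fun S => exists n, n < N /\ stage n S) HO0 O0x)
    as [O [HO [Ox [_ Hfin]]]].
  - apply locally_finite_bounded_union. intros n _. apply stage_locally_finite.
  - intros S [n [A [HA ->]]] M. exists n. split; [|exists A; auto].
    destruct (Nat.lt_ge_cases n N) as [Hlt|Hge]; [auto|].
    exfalso. apply (far n A Hge M).
  - exists O; auto.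
Qed.

End Level.

Lemma level_inside (m : nat) (V U S : set X) :
  subset (star V (refinement m)) U -> level m S -> meets S V -> subset S U.
Proof.
  intros HVU [n [A [HA ->]]] [w [Sw Vw]] y Hy. apply HVU. exists A.
  split; [auto|split; [exists w; split; [apply (piece_sub Sw)|auto]|apply (piece_sub Hy)]].
Qed.

Definition stone_base : family X := fun S =>
  (exists x, isolated T x /\ S = (fun y => y = x)) \/ exists m, level m S.

Lemma stone_base_base : base T stone_base.
Proof.
  split.
  - intros U [[x [Hx ->]] | [m [n [A [_ ->]]]]]; [exact Hx|apply piece_open].
  - intros U HU x Ux. destruct (classic (isolated T x)) as [Hi|Hx].
    + exists (fun y => y = x). split; [left; exists x; auto|split; [auto|]].
      intros y ->; auto.
    + destruct (star_eventually Hx (open_nbhd HU Ux)) as [V [m [HV sV]]].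
      destruct (piece_cover m Hx) as [n [A [HA HD]]].
      exists (piece m n A). split; [right; exists m, n, A; auto|split; [auto|]].
      apply (level_inside (sV m (le_n m))); [exists n, A; auto|].
      exists x; split; [auto|apply (nbhd_in HV)].
Qed.

(* Near x only the finitely many levels below m0 contribute sets not inside U. *)
Lemma stone_base_regular (x : X) : ~ isolated T x -> regular_at T stone_base x.
Proof.
  intros Hx U HU.
  destruct (star_eventually Hx HU) as [V [m0 [[O0 [HO0 [O0x O0V]]] sV]]].
  assert (O0U : subset O0 U).
  { intros y Hy. apply (sV m0 (le_n m0)). apply star_incl; [apply refinement_cover|auto]. }
  destruct (locally_finite_reduce (F := fun S => stone_base S /\ ~ subset S U)
              (G := fun S => exists m, m < m0 /\ level m S) HO0 O0x)
    as [O [HO [Ox [OO0 Hfin]]]].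
  - apply locally_finite_bounded_union. intros m _. apply (level_locally_finite m Hx).
  - intros S [[[w [_ ->]] | [m HS]] Hout] [z [Sz O0z]].
    + exfalso. apply Hout. intros y Hy. subst. subst. apply O0U; auto.
    + destruct (Nat.lt_ge_cases m m0) as [Hlt|Hge]; [exists m; auto|exfalso].
      apply Hout. apply (level_inside (sV m Hge) HS). exists z; split; auto.
  - exists O. split; [auto|split; [auto|split; [intros y Hy; auto|]]].
    eapply finite_family_mono; [|exact Hfin]. intros S [HS [MS Hout]]. auto.
Qed.

End WellOrdered.

End Backward.

End Topology.

Theorem mainTheorem5 (X : Type) (T : topology X) :
  T1 T ->
  ((exists B : family X, regular_base_at_nonisolated T B) <->
   (exists W : nat -> family X, strong_development_at_nonisolated T W)).
Proof.
  intro HT1. split.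
  - intros [B HB]. exists (chain_cover T B).
    exact (strong_development_of_regular_base HB HT1).
  - intros [W HW]. destruct (WellOrder.well_order_exists (set X)) as [R [R_least R_anti]].
    exists (stone_base T W R). split.
    + exact (stone_base_base HW R_least).
    + intros x Hx. exact (stone_base_regular HW R_least R_anti Hx).
Qed.
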